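(* Under the standing setting below, take $\rho(x,y)=\|\nabla h(x,y)\|^2$ and $C_0>0$. For an integer $K\ge1$ set $\alpha=K^{-1/3}$ and $\gamma=\min\{\alpha,\frac{1}{L_f+\alpha L_h}\}$, let $(x_0,y_0)$ satisfy $h(x_0,y_0)\le\alpha^2C_0$, and run the Algorithm. Then there is a constant $c>0$ depending only on $L_f,L_h,C_f,C_0,\bar f$ and an upper bound on $f(x_0,y_0)$ (not on $K$) such that $$\frac1K\sum_{k=0}^{K-1}\big(\|\Delta_k^x\|^2+\|\Delta_k^y\|^2\big)\le cK^{-2/3},\qquad \frac1K\sum_{k=0}^{K-1}\|\nabla h_k\|^2\le cK^{-2/3}.$$ Consequently, for every $\epsilon>0$ there is $K=\mathcal{O}(\epsilon^{-3/2})$ such that some $t\in\{0,\dots,K-1\}$ satisfies $\max\{\|\nabla h_t\|^2,\|\nabla f_t+\lambda_t\nabla h_t\|^2\}\le\epsilon$.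
   Context: Standing setting. $f,g:\mathbb{R}^n\times\mathbb{R}^m\to\mathbb{R}$. $f$ is continuously differentiable, $\bar f:=\inf_{(x,y)}f(x,y)>-\infty$, $\nabla f$ is $L_f$-Lipschitz, and $\|\nabla f(x,y)\|\le C_f$ for all $(x,y)$. $g$ is twice continuously differentiable, and $h(x,y):=\|\nabla_y g(x,y)\|^2$ is continuously differentiable with $\nabla h$ being $L_h$-Lipschitz ($L_h>0$). Write $\nabla h=(\nabla_x h,\nabla_y h)$, $f_k=f(x_k,y_k)$, $h_k=h(x_k,y_k)$, $\nabla f_k=\nabla f(x_k,y_k)$, $\nabla h_k=\nabla h(x_k,y_k)$, etc. Given $\rho:\mathbb{R}^n\times\mathbb{R}^m\to\mathbb{R}_{\ge0}$, $\alpha,\gamma>0$, $(x_0,y_0)$, the Algorithm iterates for $k\ge0$: $\lambda_k=\big[-\nabla_x h_k^\top\nabla_x f_k-\nabla_y h_k^\top\nabla_y f_k+\alpha\rho(x_k,y_k)\big]_+/(\|\nabla_x h_k\|^2+\|\nabla_y h_k\|^2)$ if $\nabla h_k\ne0$ and $\lambda_k=0$ otherwise ($[t]_+=\max\{0,t\}$); $\Delta_k^x=-\nabla_x f_k-\lambda_k\nabla_x h_k$, $\Delta_k^y=-\nabla_y f_k-\lambda_k\nabla_y h_k$; $x_{k+1}=x_k+\gamma\Delta_k^x$, $y_{k+1}=y_k+\gamma\Delta_k^y$. Note $\nabla f_k+\lambda_k\nabla h_k=-(\Delta_k^x,\Delta_k^y)$. *)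

From HB Require Import structures.
From mathcomp Require Import all_boot all_order all_algebra.
From mathcomp Require Import all_classical all_reals all_analysis.
Set Implicit Arguments. Unset Strict Implicit. Unset Printing Implicit Defensive.
Import Order.TTheory GRing.Theory Num.Theory.
Import numFieldNormedType.Exports.
Local Open Scope ring_scope.

Section Defs.
Variable R : realType.

Definition dotv n (u v : 'rV[R]_n) : R := \sum_(i < n) u 0 i * v 0 i.
Definition sqn n (u : 'rV[R]_n) : R := dotv u u.
Definition enorm2 n m (p : 'rV[R]_n * 'rV[R]_m) : R := Num.sqrt (sqn p.1 + sqn p.2).

Definition has_gradient n m (F : 'rV[R]_n * 'rV[R]_m -> R)
    (Gx : 'rV[R]_n * 'rV[R]_m -> 'rV[R]_n) (Gy : 'rV[R]_n * 'rV[R]_m -> 'rV[R]_m) :=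
  forall p, differentiable F p /\
    forall v : 'rV[R]_n * 'rV[R]_m, 'd F p v = dotv (Gx p) v.1 + dotv (Gy p) v.2.

Definition C1map n m k (F : 'rV[R]_n * 'rV[R]_m -> 'rV[R]_k) :=
  (forall p, differentiable F p) /\
  (forall v : 'rV[R]_n * 'rV[R]_m, continuous (fun p => 'd F p v)).

Definition lipschitz_grad n m (L : R)
    (Gx : 'rV[R]_n * 'rV[R]_m -> 'rV[R]_n) (Gy : 'rV[R]_n * 'rV[R]_m -> 'rV[R]_m) :=
  forall p q, enorm2 (Gx p - Gx q, Gy p - Gy q) <= L * enorm2 (p.1 - q.1, p.2 - q.2).

(* The Algorithm. Gfx, Gfy: gradient of f; Hx, Hy: gradient of h. *)
Section Algo.
Variables (n m : nat).
Variables (Gfx Hx : 'rV[R]_n * 'rV[R]_m -> 'rV[R]_n)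
          (Gfy Hy : 'rV[R]_n * 'rV[R]_m -> 'rV[R]_m).
Variables (rho : 'rV[R]_n * 'rV[R]_m -> R) (alpha gamma : R).

Definition alg_lambda (p : 'rV[R]_n * 'rV[R]_m) : R :=
  if (Hx p != 0) || (Hy p != 0) then
    Num.max 0 (- dotv (Hx p) (Gfx p) - dotv (Hy p) (Gfy p) + alpha * rho p)
      / (sqn (Hx p) + sqn (Hy p))
  else 0.

Definition alg_Dx (p : 'rV[R]_n * 'rV[R]_m) : 'rV[R]_n :=
  - Gfx p - alg_lambda p *: Hx p.
Definition alg_Dy (p : 'rV[R]_n * 'rV[R]_m) : 'rV[R]_m :=
  - Gfy p - alg_lambda p *: Hy p.

Fixpoint alg_iter (x0 : 'rV[R]_n) (y0 : 'rV[R]_m) (k : nat) : 'rV[R]_n * 'rV[R]_m :=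
  match k with
  | 0%N => (x0, y0)
  | k'.+1 => let p := alg_iter x0 y0 k' in
             (p.1 + gamma *: alg_Dx p, p.2 + gamma *: alg_Dy p)
  end.
End Algo.
End Defs.

(* With alpha = K^(-1/3), one step of the algorithm decreases h by gamma*alpha*||grad h||^2
   and the merit function f + alpha*h by gamma/2 * ||D||^2, up to second-order terms and the
   cross term gamma*alpha*<grad h, grad f>.  The multiplier lambda drops out of the merit
   decrease by complementary slackness, and the cross term is absorbed by AM-GM together with
   the decrease of h.  Telescoping over K steps, using K*alpha^3 = 1 and h_0 <= alpha^2*C0,
   bounds alpha * sum ||D_k||^2 and alpha * sum ||grad h_k||^2 by a constant independent of K;
   dividing by K gives the K^(-2/3) rates, and an averaging argument yields the index t. *)

From HB Require Import structures.
From mathcomp Require Import all_boot all_order all_algebra.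
From mathcomp Require Import all_classical all_reals all_analysis.
From mathcomp Require Import ring lra.
Import Order.TTheory GRing.Theory Num.Theory.
Import numFieldNormedType.Exports.
Local Open Scope ring_scope.
Set Implicit Arguments. Unset Strict Implicit. Unset Printing Implicit Defensive.

Section InnerProduct.
Variable R : realType.

Lemma dotvC n (u v : 'rV[R]_n) : dotv u v = dotv v u.
Proof. by apply: eq_bigr => i _; rewrite mulrC. Qed.

Lemma dotvDl n (u v w : 'rV[R]_n) : dotv (u + v) w = dotv u w + dotv v w.
Proof. by rewrite /dotv -big_split; apply: eq_bigr => i _; rewrite mxE mulrDl. Qed.

Lemma dotvZl n k (u w : 'rV[R]_n) : dotv (k *: u) w = k * dotv u w.
Proof. by rewrite /dotv mulr_sumr; apply: eq_bigr => i _; rewrite mxE mulrA. Qed.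

Lemma sqn_ge0 n (u : 'rV[R]_n) : 0 <= sqn u.
Proof. by apply: sumr_ge0 => i _; rewrite -expr2 sqr_ge0. Qed.

Lemma sqn_eq0 n (u : 'rV[R]_n) : sqn u = 0 -> u = 0.
Proof.
move/eqP; rewrite psumr_eq0 => [/allP u0|i _]; last by rewrite -expr2 sqr_ge0.
apply/rowP => i; apply/eqP; rewrite mxE -sqrf_eq0 expr2.
exact: u0 (mem_index_enum i).
Qed.

Section Pairs.
Variables n m : nat.
Implicit Types p q r : 'rV[R]_n * 'rV[R]_m.

Definition pdot p q := dotv p.1 q.1 + dotv p.2 q.2.
Definition psq p := pdot p p.

Lemma pdotC p q : pdot p q = pdot q p.
Proof. by rewrite /pdot dotvC (dotvC p.2). Qed.

Lemma pdotDl p q r : pdot (p + q) r = pdot p r + pdot q r.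
Proof. by rewrite /pdot !dotvDl addrACA. Qed.

Lemma pdotZl k p r : pdot (k *: p) r = k * pdot p r.
Proof. by rewrite /pdot !dotvZl mulrDr. Qed.

Lemma pdotNl p r : pdot (- p) r = - pdot p r.
Proof. by rewrite -scaleN1r pdotZl mulN1r. Qed.

Lemma pdotBl p q r : pdot (p - q) r = pdot p r - pdot q r.
Proof. by rewrite pdotDl pdotNl. Qed.

Lemma pdotDr p q r : pdot r (p + q) = pdot r p + pdot r q.
Proof. by rewrite pdotC pdotDl !(pdotC r). Qed.

Lemma pdotZr k p r : pdot r (k *: p) = k * pdot r p.
Proof. by rewrite pdotC pdotZl pdotC. Qed.

Lemma pdotNr p r : pdot r (- p) = - pdot r p.
Proof. by rewrite pdotC pdotNl pdotC. Qed.

Lemma pdotBr p q r : pdot r (p - q) = pdot r p - pdot r q.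
Proof. by rewrite pdotDr pdotNr. Qed.

Lemma pdot0l r : pdot 0 r = 0.
Proof. by rewrite -(scale0r (0 : 'rV[R]_n * 'rV[R]_m)) pdotZl mul0r. Qed.

Lemma psq_ge0 p : 0 <= psq p.
Proof. by rewrite addr_ge0 ?sqn_ge0. Qed.

Lemma psq_eq0 p : psq p = 0 -> p = 0.
Proof.
case: p => a b; rewrite /psq /pdot /= => /eqP; rewrite paddr_eq0 ?sqn_ge0 //.
by case/andP => /eqP/sqn_eq0 -> /eqP/sqn_eq0 ->.
Qed.

Lemma psqN p : psq (- p) = psq p.
Proof. by rewrite /psq pdotNl pdotNr opprK. Qed.

Lemma psqZ k p : psq (k *: p) = k ^+ 2 * psq p.
Proof. by rewrite /psq pdotZl pdotZr mulrA expr2. Qed.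

Lemma enorm2E p : enorm2 p = Num.sqrt (psq p).
Proof. by []. Qed.

Lemma enorm2_sqr p : enorm2 p ^+ 2 = psq p.
Proof. by rewrite sqr_sqrtr ?psq_ge0. Qed.

Lemma enorm2Z k p : enorm2 (k *: p) = `|k| * enorm2 p.
Proof. by rewrite !enorm2E psqZ sqrtrM ?sqr_ge0 // sqrtr_sqr. Qed.

Lemma pdot_amgm s p q : - (2 * s * pdot p q) <= psq p + s ^+ 2 * psq q.
Proof.
rewrite -subr_ge0 (_ : _ - _ = psq (p + s *: q)) ?psq_ge0 //.
by rewrite /psq pdotDl !pdotDr !pdotZl !pdotZr (pdotC q p); ring.
Qed.

Lemma pdot_le_enorm2 p q : pdot p q <= enorm2 p * enorm2 q.
Proof.
have [/psq_eq0 ->|p_neq0] := eqVneq (psq p) 0.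
  by rewrite pdot0l mulr_ge0 ?sqrtr_ge0.
have p_gt0 : 0 < psq p by rewrite lt_def p_neq0 psq_ge0.
have sqr_le : pdot p q ^+ 2 <= psq p * psq q.
  rewrite -subr_ge0 -(pmulr_rge0 _ p_gt0).
  suff -> : psq p * (psq p * psq q - pdot p q ^+ 2) =
            psq (psq p *: q - pdot p q *: p) by exact: psq_ge0.
  by rewrite [in RHS]/psq pdotBl !pdotBr !pdotZl !pdotZr (pdotC q p) /psq; ring.
rewrite !enorm2E -sqrtrM ?psq_ge0 // (le_trans (ler_norm _)) //.
by rewrite -sqrtr_sqr ler_sqrt // mulr_ge0 ?psq_ge0.
Qed.

End Pairs.
End InnerProduct.

Section Descent.
Variable R : realType.

Lemma increment_le_of_deriv_le (phi dphi : R -> R) (N : R) :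
  (forall t : R, is_derive t (1 : R) phi (dphi t)) ->
  (forall t : R, 0 < t < 1 -> dphi t <= dphi 0 + N * t) ->
  phi 1 <= phi 0 + dphi 0 + N / 2.
Proof.
move=> dphiP dphi_le.
pose psi := phi - (dphi 0 \*: (@id R)) - (N / 2 \*: ((@id R) ^+ 2)).
pose dpsi t := dphi t - dphi 0 *: 1 - N / 2 *: ((2%:R * t ^+ 1) *: 1).
have psiP t : is_derive t (1 : R) psi (dpsi t) by exact: is_deriveB.
have [t t01 psi10] := MVT ltr01 (fun t _ => psiP t)
  (derivable_within_continuous (fun t _ => @ex_derive _ _ _ _ _ _ _ (psiP t))).
have dpsi_le0 : dpsi t <= 0.
  move: t01; rewrite in_itv /= => /dphi_le.
  rewrite /dpsi -[dphi 0 *: 1]/(dphi 0 * 1).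
  by rewrite -[_ *: ((_ * _) *: 1)]/(N / 2 * ((2 * t ^+ 1) * 1)); lra.
move: psi10; rewrite subr0 mulr1 /psi !fctE /= expr1n expr0n /= !scaler0.
by rewrite -[(dphi 0)%:A]/(dphi 0 * 1) -[(N / 2) *: 1]/(N / 2 * 1); lra.
Qed.

Variables (n m : nat) (F : 'rV[R]_n * 'rV[R]_m -> R).
Variables (Gx : 'rV[R]_n * 'rV[R]_m -> 'rV[R]_n) (Gy : 'rV[R]_n * 'rV[R]_m -> 'rV[R]_m).
Hypothesis gradF : has_gradient F Gx Gy.

Lemma has_gradient_derive_line p d (t : R) :
  is_derive t 1 (fun t : R => F (p + t *: d)) (pdot (Gx (p + t *: d), Gy (p + t *: d)) d).
Proof.
set q := p + t *: d.
have shiftE : (fun h : R => h^-1 *: (((fun t => F (p + t *: d)) \o shift t) (h *: 1)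
                                   - F (p + t *: d))) =
              (fun h : R => h^-1 *: ((F \o shift q) (h *: d) - F q)).
  apply/funext => h /=; congr (_ *: (F _ - _)).
  by rewrite -[h%:A]/(h * 1) mulr1 scalerDl addrCA.
have [dF dFE] := gradF q.
split; first by rewrite /derivable shiftE; exact: diff_derivable.
by rewrite /derive shiftE -/(derive F q d) deriveE.
Qed.

Lemma lipschitz_grad_descent L p d : lipschitz_grad L Gx Gy -> 0 <= L ->
  F (p + d) <= F p + pdot (Gx p, Gy p) d + L / 2 * psq d.
Proof.
move=> lipG L0.
have := @increment_le_of_deriv_le (fun t => F (p + t *: d))
  (fun t => pdot (Gx (p + t *: d), Gy (p + t *: d)) d) (L * psq d)
  (has_gradient_derive_line p d).
rewrite scale1r !scale0r addr0 mulrAC; apply=> t /andP[t_gt0 _].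
set q := p + t *: d.
rewrite -lerBlDl -pdotBl -enorm2_sqr expr2.
rewrite (_ : L * _ * t = L * (t * enorm2 d) * enorm2 d); last by ring.
apply: (le_trans (pdot_le_enorm2 _ _)); apply: ler_wpM2r; first exact: sqrtr_ge0.
have -> : t * enorm2 d = enorm2 (q.1 - p.1, q.2 - p.2).
  rewrite -(gtr0_norm t_gt0) -enorm2Z; congr enorm2.
  by rewrite /q /=; congr (_, _); rewrite addrC addKr.
exact: lipG.
Qed.

End Descent.

Lemma sumr_le_telescope (R : realType) (a u e : nat -> R) K :
  (forall k, a k <= u k - u k.+1 + e k) ->
  \sum_(k < K) a k <= u 0%N - u K + \sum_(k < K) e k.
Proof.
move=> le_aue; elim: K => [|K IHK]; first by rewrite !big_ord0 subrr addr0.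
by rewrite !big_ord_recr /=; have := le_aue K; lra.
Qed.

Section Iteration.
Variable R : realType.
Variables (n m : nat) (Gfx Hx : 'rV[R]_n * 'rV[R]_m -> 'rV[R]_n)
          (Gfy Hy : 'rV[R]_n * 'rV[R]_m -> 'rV[R]_m) (alpha : R).

Definition sqgrad (p : 'rV[R]_n * 'rV[R]_m) := psq (Hx p, Hy p).

Local Notation gf p := (Gfx p, Gfy p).
Local Notation gh p := (Hx p, Hy p).
Local Notation lam := (alg_lambda Gfx Hx Gfy Hy sqgrad alpha).
Local Notation dir p := (alg_Dx Gfx Hx Gfy Hy sqgrad alpha p,
                         alg_Dy Gfx Hx Gfy Hy sqgrad alpha p).

Lemma alg_dirE p : dir p = - gf p - lam p *: gh p.
Proof. by []. Qed.

Lemma alg_lambda_eq0 p : psq (gh p) = 0 -> lam p = 0.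
Proof.
by rewrite /alg_lambda => gh0; case: ifP => // _; rewrite [sqn _ + _]gh0 invr0 mulr0.
Qed.

Lemma alg_lambdaM p :
  lam p * psq (gh p) = Num.max 0 (alpha * psq (gh p) - pdot (gh p) (gf p)).
Proof.
have [gh0|gh_neq0] := eqVneq (psq (gh p)) 0.
  by rewrite alg_lambda_eq0 // mul0r gh0 (psq_eq0 gh0) pdot0l mulr0 subrr maxxx.
rewrite /alg_lambda ifT; last first.
  apply: contraNT gh_neq0; rewrite negb_or !negbK => /andP[/eqP-> /eqP->].
  exact/eqP/(pdot0l 0).
rewrite divfK // /pdot /sqgrad /=; congr (Num.max 0 _); ring.
Qed.

Lemma enorm2_kkt_residual p :
  enorm2 (Gfx p + lam p *: Hx p, Gfy p + lam p *: Hy p) ^+ 2 = psq (dir p).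
Proof. by rewrite enorm2_sqr alg_dirE -opprD psqN. Qed.

Lemma pdot_grad_alg_dir p :
  pdot (gh p) (dir p) = - pdot (gh p) (gf p) - lam p * psq (gh p).
Proof. by rewrite alg_dirE pdotBr pdotNr pdotZr. Qed.

Lemma alg_dir_decrease p : alpha * psq (gh p) <= - pdot (gh p) (dir p).
Proof.
rewrite pdot_grad_alg_dir opprB opprK alg_lambdaM -lerBlDr le_max.
by rewrite lexx orbT.
Qed.

Lemma alg_lambda_complementary p :
  lam p * (pdot (gh p) (dir p) + alpha * psq (gh p)) = 0.
Proof.
rewrite pdot_grad_alg_dir.
have [X_le0|X_gt0] := leP (alpha * psq (gh p) - pdot (gh p) (gf p)) 0.
  have /eqP := alg_lambdaM p; rewrite max_l // mulf_eq0.
  by case/orP => [/eqP->|/eqP/alg_lambda_eq0->]; rewrite mul0r.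
have -> : - pdot (gh p) (gf p) - lam p * psq (gh p) + alpha * psq (gh p) =
          (alpha * psq (gh p) - pdot (gh p) (gf p)) - lam p * psq (gh p) by ring.
by rewrite alg_lambdaM max_r ?ltW // subrr mulr0.
Qed.

(* Complementary slackness removes the multiplier from the slope of f + alpha*h along D. *)
Lemma pdot_merit_alg_dir p :
  pdot (gf p + alpha *: gh p) (dir p) = - psq (dir p) - alpha * pdot (gh p) (gf p).
Proof.
have -> : gf p + alpha *: gh p = - dir p + (alpha - lam p) *: gh p.
  by rewrite alg_dirE scalerBl opprB opprK [RHS]addrC addrA subrK addrC.
have := alg_lambda_complementary p; rewrite pdot_grad_alg_dir => compl.
by rewrite pdotDl pdotNl pdotZl pdot_grad_alg_dir -[RHS]subr0 -compl /psq; ring.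
Qed.

Section Step.
Variables (f h : 'rV[R]_n * 'rV[R]_m -> R) (Lf Lh gamma : R).
Hypotheses (gradf : has_gradient f Gfx Gfy) (lipf : lipschitz_grad Lf Gfx Gfy).
Hypotheses (gradh : has_gradient h Hx Hy) (liph : lipschitz_grad Lh Hx Hy).
Hypotheses (Lf_ge0 : 0 <= Lf) (Lh_gt0 : 0 < Lh) (alpha_gt0 : 0 < alpha).
Hypotheses (gamma_gt0 : 0 < gamma) (gamma_le_alpha : gamma <= alpha).
Hypothesis gamma_small : gamma * (Lf + alpha * Lh) <= 1.

Local Notation next p := (p + gamma *: dir p).
Local Notation merit p := (f p + alpha * h p).

Lemma h_decrease p :
  gamma * alpha * psq (gh p) <= h p - h (next p) + Lh / 2 * gamma ^+ 2 * psq (dir p).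
Proof.
have := lipschitz_grad_descent gradh p (gamma *: dir p) liph (ltW Lh_gt0).
rewrite pdotZr psqZ.
have := ler_wpM2l (ltW gamma_gt0) (alg_dir_decrease p).
lra.
Qed.

Lemma merit_decrease p :
  merit (next p) <= merit p - gamma / 2 * psq (dir p) - gamma * alpha * pdot (gh p) (gf p).
Proof.
have := lipschitz_grad_descent gradf p (gamma *: dir p) lipf Lf_ge0.
have := lipschitz_grad_descent gradh p (gamma *: dir p) liph (ltW Lh_gt0).
rewrite !pdotZr psqZ => /(ler_wpM2l (ltW alpha_gt0)).
have : gamma * pdot (gf p) (dir p) + alpha * (gamma * pdot (gh p) (dir p)) =
       gamma * (- psq (dir p) - alpha * pdot (gh p) (gf p)).
  by rewrite -pdot_merit_alg_dir pdotDl pdotZl; ring.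
have : 0 <= (1 - gamma * (Lf + alpha * Lh)) * (gamma * psq (dir p)).
  by apply: mulr_ge0; [rewrite subr_ge0 | exact: mulr_ge0 (ltW _) (psq_ge0 _)].
rewrite !expr2; lra.
Qed.

Lemma alg_dir_bound C2 p : psq (gf p) <= C2 ->
  alpha * Lh * gamma * psq (dir p) <=
    4 * alpha * Lh * (merit p - merit (next p)) + 2 * (h p - h (next p))
    + 2 * gamma * alpha ^+ 3 * Lh ^+ 2 * C2.
Proof.
move=> gfC2.
have aLh_ge0 : 0 <= alpha * Lh by rewrite mulr_ge0 ?ltW.
have ga_ge0 : 0 <= gamma * alpha by rewrite mulr_ge0 ?ltW.
have := ler_wpM2l (mulr_ge0 (ler0n _ 2) aLh_ge0) (merit_decrease p).
have := ler_wpM2l ga_ge0 (pdot_amgm (alpha * Lh) (gh p) (gf p)).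
have := ler_wpM2l (mulr_ge0 ga_ge0 (sqr_ge0 (alpha * Lh))) gfC2.
have := h_decrease p.
have : 0 <= (alpha - gamma) * (Lh * gamma * psq (dir p)).
  apply: mulr_ge0; first by rewrite subr_ge0.
  by rewrite !mulr_ge0 ?psq_ge0 ?ltW.
rewrite !expr2 !exprS expr0; lra.
Qed.

Variables (x0 : 'rV[R]_n) (y0 : 'rV[R]_m).
Local Notation it := (alg_iter Gfx Hx Gfy Hy sqgrad alpha gamma x0 y0).

Lemma sum_sqgrad_le K :
  gamma * alpha * \sum_(k < K) psq (gh (it k)) <=
    h (it 0%N) - h (it K) + Lh / 2 * gamma ^+ 2 * \sum_(k < K) psq (dir (it k)).
Proof.
rewrite !mulr_sumr.
apply: (sumr_le_telescope (a := fun k => gamma * alpha * psq (gh (it k)))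
          (u := fun k => h (it k)) (e := fun k => Lh / 2 * gamma ^+ 2 * psq (dir (it k)))) => k.
exact: h_decrease.
Qed.

Lemma sum_dir_le C2 K : (forall p, psq (gf p) <= C2) ->
  alpha * Lh * gamma * \sum_(k < K) psq (dir (it k)) <=
    4 * alpha * Lh * (merit (it 0%N) - merit (it K)) + 2 * (h (it 0%N) - h (it K))
    + K%:R * (2 * gamma * alpha ^+ 3 * Lh ^+ 2 * C2).
Proof.
move=> gfC2; set c := 2 * gamma * _ * _ * C2.
rewrite (_ : K%:R * c = \sum_(k < K) c) ?mulr_sumr; last by rewrite sumr_const card_ord mulr_natl.
apply: le_trans (sumr_le_telescope (a := fun k => alpha * Lh * gamma * psq (dir (it k)))
  (u := fun k => 4 * alpha * Lh * merit (it k) + 2 * h (it k))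
  (e := fun=> c) K _) _ => [k|].
  by have := alg_dir_bound (gfC2 (it k)); rewrite /c; lra.
by rewrite lerD2r; lra.
Qed.

Section Bounds.
Variables (fbar F0 C0 C2 : R) (K : nat).
Hypotheses (f_ge : forall p, fbar <= f p) (h_ge0 : forall p, 0 <= h p).
Hypothesis gfC2 : forall p, psq (gf p) <= C2.
Hypotheses (alpha_le1 : alpha <= 1) (alpha_le : alpha <= (1 + Lf + Lh) * gamma).
Hypothesis K_alpha : K%:R * alpha ^+ 3 = 1.
Hypotheses (h0_le : h (it 0%N) <= alpha ^+ 2 * C0) (f0_le : f (it 0%N) <= F0).

Local Notation SD := (\sum_(k < K) psq (dir (it k))).
Local Notation Mdir := ((1 + Lf + Lh) * (4 * (F0 - fbar + C0) + 2 * C0 / Lh + 2 * Lh * C2)).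

Let C0_ge0 : 0 <= C0.
Proof. by have := le_trans (h_ge0 _) h0_le; rewrite pmulr_rge0 ?exprn_gt0. Qed.

Lemma alpha_sum_dir_le : alpha * SD <= Mdir.
Proof.
have C2_ge0 : 0 <= C2 := le_trans (psq_ge0 _) (gfC2 (x0, y0)).
have alpha2_le : alpha ^+ 2 <= alpha by rewrite expr2 ger_pMr.
have alpha3_le1 : alpha ^+ 3 <= 1 by rewrite exprn_ile1 // ltW.
have merit_le : merit (it 0%N) - merit (it K) <= F0 - fbar + C0.
  have := f_ge (it K); have := ler_wpM2l (ltW alpha_gt0) (h_ge0 (it K)).
  have := ler_wpM2l (ltW alpha_gt0) h0_le; have := ler_wpM2r C0_ge0 alpha3_le1.
  by rewrite mulr0 mulrA -exprS; have := f0_le; lra.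
have h_le : h (it 0%N) - h (it K) <= alpha * C0.
  by have := ler_wpM2r C0_ge0 alpha2_le; have := h_ge0 (it K); have := h0_le; lra.
have sum_le := sum_dir_le K gfC2.
have K_term : K%:R * (2 * gamma * alpha ^+ 3 * Lh ^+ 2 * C2) = 2 * gamma * Lh ^+ 2 * C2.
  by transitivity (2 * gamma * Lh ^+ 2 * C2 * (K%:R * alpha ^+ 3));
    [ring | rewrite K_alpha mulr1].
rewrite K_term in sum_le.
have : Lh * gamma * SD <= 4 * Lh * (F0 - fbar + C0) + 2 * C0 + 2 * Lh ^+ 2 * C2.
  rewrite -(ler_pM2l alpha_gt0).
  have := ler_wpM2l (mulr_ge0 (ler0n _ 4) (mulr_ge0 (ltW alpha_gt0) (ltW Lh_gt0))) merit_le.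
  have := ler_wpM2r (mulr_ge0 (ler0n _ 2) (mulr_ge0 (sqr_ge0 Lh) C2_ge0)) gamma_le_alpha.
  lra.
have SD_ge0 : 0 <= SD by apply: sumr_ge0 => k _; exact: psq_ge0.
have T_ge0 : 0 <= 1 + Lf + Lh by have := Lf_ge0; have := Lh_gt0; lra.
move=> /(ler_wpM2l T_ge0); have := ler_wpM2r (mulr_ge0 (ltW Lh_gt0) SD_ge0) alpha_le.
rewrite (_ : Mdir = (1 + Lf + Lh) * (4 * Lh * (F0 - fbar + C0) + 2 * C0 + 2 * Lh ^+ 2 * C2) / Lh).
  by rewrite ler_pdivlMr //; lra.
by field; rewrite gt_eqF.
Qed.

Lemma alpha_sum_sqgrad_le :
  alpha * \sum_(k < K) psq (gh (it k)) <= (1 + Lf + Lh) * C0 + Lh / 2 * Mdir.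
Proof.
have SD_ge0 : 0 <= SD by apply: sumr_ge0 => k _; exact: psq_ge0.
have gLh_ge0 : 0 <= gamma * (Lh / 2) by rewrite mulr_ge0 ?divr_ge0 ?ltW.
have TgC0_ge0 : 0 <= (1 + Lf + Lh) * gamma * C0.
  apply: mulr_ge0 C0_ge0; apply: mulr_ge0 (ltW gamma_gt0).
  by have := Lf_ge0; have := Lh_gt0; lra.
rewrite -(ler_pM2l gamma_gt0).
have := sum_sqgrad_le K; have := h_ge0 (it K); have := h0_le.
have := ler_wpM2l gLh_ge0 alpha_sum_dir_le.
have := ler_wpM2r (mulr_ge0 gLh_ge0 SD_ge0) gamma_le_alpha.
have := ler_wpM2r C0_ge0 (ler_wpM2l (ltW alpha_gt0) alpha_le).
have := ler_wpM2r TgC0_ge0 alpha_le1.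
rewrite !expr2; lra.
Qed.

End Bounds.
End Step.
End Iteration.

Section StepSize.
Variables (R : realType) (Lf Lh alpha : R).
Hypotheses (Lf_ge0 : 0 <= Lf) (Lh_gt0 : 0 < Lh).
Hypotheses (alpha_gt0 : 0 < alpha) (alpha_le1 : alpha <= 1).

Local Notation gamma := (Num.min alpha (1 / (Lf + alpha * Lh))).

Let L_gt0 : 0 < Lf + alpha * Lh.
Proof. by rewrite ltr_wpDl // mulr_gt0. Qed.

Lemma step_gt0 : 0 < gamma.
Proof. by rewrite lt_min alpha_gt0 divr_gt0. Qed.

Lemma step_le_alpha : gamma <= alpha.
Proof. by rewrite ge_min lexx. Qed.

Lemma step_mul_le1 : gamma * (Lf + alpha * Lh) <= 1.
Proof. by rewrite -ler_pdivlMr // mul1r ge_min lexx orbT. Qed.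

Lemma alpha_le_step : alpha <= (1 + Lf + Lh) * gamma.
Proof.
have [_|lt_inv] := leP alpha (1 / (Lf + alpha * Lh)).
  by rewrite ler_peMl ?ltW //; have := Lf_ge0; have := Lh_gt0; lra.
rewrite mul1r ler_pdivlMr //.
have := ler_piMl Lf_ge0 alpha_le1.
have := ler_piMl (ltW Lh_gt0) (le_trans (ler_piMl (ltW alpha_gt0) alpha_le1) alpha_le1).
lra.
Qed.
End StepSize.

Section PowerRates.
Variable R : realType.

Lemma powR_cube_third (x : R) : 0 <= x -> (x `^ (- (1 / 3))) ^+ 3 = x^-1.
Proof.
move=> x_ge0; rewrite -powR_mulrn ?powR_ge0 // -powRrM.
by rewrite (_ : - (1 / 3) * 3%:R = -1) ?powR_inv1 //; field.
Qed.

Lemma powR_sqr_third (x : R) : x `^ (- (2 / 3)) = (x `^ (- (1 / 3))) ^+ 2.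
Proof. by rewrite -powR_mulrn ?powR_ge0 // -powRrM; congr (_ `^ _); field. Qed.

Lemma powR_third_le1 (x : R) : 1 <= x -> x `^ (- (1 / 3)) <= 1.
Proof. by move=> x_ge1; rewrite -[leRHS](powRr0 x) ler_powR. Qed.

Lemma mean_le_rate (K : nat) (S c : R) : 0 <= S ->
  K%:R `^ (- (1 / 3)) * S <= c -> K%:R^-1 * S <= c * K%:R `^ (- (2 / 3)).
Proof.
move=> S_ge0 le_c; rewrite -powR_cube_third // powR_sqr_third exprS mulrAC.
by rewrite ler_wpM2r ?exprn_ge0 ?powR_ge0.
Qed.

Lemma exists_le_mean (a : nat -> R) (K : nat) (e : R) : (0 < K)%N ->
  K%:R^-1 * \sum_(k < K) a k <= e -> exists2 t, (t < K)%N & a t <= e.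
Proof.
move=> K_gt0; have [/existsP[t ate] _|/existsPn a_gt] := boolP [exists t : 'I_K, a t <= e].
  by exists t.
rewrite leNgt => /negP[]; rewrite mulrC ltr_pdivlMr ?ltr0n // mulr_natr.
rewrite (_ : e *+ K = \sum_(k < K) e); last by rewrite sumr_const card_ord.
apply: ltr_sum => [|k _]; first by apply/hasP; exists (Ordinal K_gt0); rewrite ?mem_index_enum.
by rewrite ltNge; exact: a_gt.
Qed.

Lemma exists_index_rate (c eps : R) : 0 < c -> 0 < eps ->
  exists K : nat, [/\ (0 < K)%N, K%:R <= c `^ (3 / 2) * eps `^ (- (3 / 2)) + 1
                    & c * K%:R `^ (- (2 / 3)) <= eps].
Proof.
move=> c_gt0 eps_gt0; pose X := (c / eps) `^ (3 / 2).
have ceps_ge0 : 0 <= c / eps by rewrite divr_ge0 ?ltW.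
exists (Num.truncn X).+1; split => //.
  rewrite -natr1 lerD2r (_ : _ * _ = X) ?truncn_le ?powR_ge0 //.
  by rewrite /X powRM ?invr_ge0 ?ltW // -(powR_inv1 (ltW eps_gt0)) -powRrM mulN1r.
have X23 : X `^ (2 / 3) = c / eps.
  by rewrite -powRrM (_ : 3 / 2 * (2 / 3) = 1) ?powRr1 //; field.
rewrite powRN ler_pdivrMr ?powR_gt0 ?ltr0n // -ler_pdivrMl // mulrC -X23.
by apply: ge0_ler_powR; rewrite ?nnegrE ?powR_ge0 ?ltW ?truncnS_gt.
Qed.
End PowerRates.

Section Complexity.
Variables (R : realType) (Lf Lh Cf C0 fbar F0 : R) (n m : nat).
Variables (f h : 'rV[R]_n * 'rV[R]_m -> R) (Gfx Hx : 'rV[R]_n * 'rV[R]_m -> 'rV[R]_n)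
          (Gfy Hy : 'rV[R]_n * 'rV[R]_m -> 'rV[R]_m).
Hypotheses (Lf_ge0 : 0 <= Lf) (Lh_gt0 : 0 < Lh) (C0_gt0 : 0 < C0).
Hypotheses (gradf : has_gradient f Gfx Gfy) (lipf : lipschitz_grad Lf Gfx Gfy).
Hypotheses (f_ge : forall p, fbar <= f p) (Cf_bound : forall p, enorm2 (Gfx p, Gfy p) <= Cf).
Hypotheses (gradh : has_gradient h Hx Hy) (liph : lipschitz_grad Lh Hx Hy).
Hypothesis h_ge0 : forall p, 0 <= h p.

Local Notation alpha K := (K%:R `^ (- (1 / 3)) : R).
Local Notation gamma K := (Num.min (alpha K) (1 / (Lf + alpha K * Lh))).
Local Notation it K := (alg_iter Gfx Hx Gfy Hy (sqgrad Hx Hy) (alpha K) (gamma K)).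
Local Notation dir K p := (alg_Dx Gfx Hx Gfy Hy (sqgrad Hx Hy) (alpha K) p,
                           alg_Dy Gfx Hx Gfy Hy (sqgrad Hx Hy) (alpha K) p).
Local Notation T := (1 + Lf + Lh).
Local Notation Mdir B := (T * (4 * (B + C0) + 2 * C0 / Lh + 2 * Lh * Cf ^+ 2)).

Definition rate_const := T * C0 + (1 + Lh / 2) * Mdir (`|F0 - fbar|).

Let T_gt0 : 0 < T.
Proof. by have := Lf_ge0; have := Lh_gt0; lra. Qed.

Let Mdir_ge0 : 0 <= Mdir (`|F0 - fbar|).
Proof.
apply: (mulr_ge0 (ltW T_gt0)); have := normr_ge0 (F0 - fbar); have := ltW C0_gt0.
have := divr_ge0 (ltW C0_gt0) (ltW Lh_gt0); have := mulr_ge0 (ltW Lh_gt0) (sqr_ge0 Cf).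
lra.
Qed.

Lemma rate_const_gt0 : 0 < rate_const.
Proof.
have := mulr_gt0 T_gt0 C0_gt0.
have : 0 <= 1 + Lh / 2 by rewrite addr_ge0 ?divr_ge0 ?ltW.
move/mulr_ge0/(_ Mdir_ge0).
rewrite /rate_const; lra.
Qed.

Lemma alg_alpha_sums_le K x0 y0 : (0 < K)%N ->
  h (x0, y0) <= alpha K ^+ 2 * C0 -> f (x0, y0) <= F0 ->
  alpha K * \sum_(k < K) psq (dir K (it K x0 y0 k)) <= rate_const /\
  alpha K * \sum_(k < K) psq (Hx (it K x0 y0 k), Hy (it K x0 y0 k)) <= rate_const.
Proof.
move=> K_gt0 h0_le f0_le.
have K_ge1 : 1 <= K%:R :> R by rewrite ler1n.
have alpha_gt0 : 0 < alpha K by rewrite powR_gt0 // (lt_le_trans ltr01).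
have alpha_le1 := powR_third_le1 K_ge1.
have K_alpha : K%:R * alpha K ^+ 3 = 1.
  by rewrite powR_cube_third ?ler0n // mulfV // pnatr_eq0 -lt0n.
have gfC2 p : psq (Gfx p, Gfy p) <= Cf ^+ 2.
  by rewrite -enorm2_sqr !expr2 ler_pM ?sqrtr_ge0.
have gamma_gt0 := step_gt0 Lf_ge0 Lh_gt0 alpha_gt0.
have gamma_le_alpha := step_le_alpha Lf Lh (alpha K).
have gamma_small := step_mul_le1 Lf_ge0 Lh_gt0 alpha_gt0.
have alpha_le := alpha_le_step Lf_ge0 Lh_gt0 alpha_gt0 alpha_le1.
have sumD := alpha_sum_dir_le gradf lipf gradh liph Lf_ge0 Lh_gt0 alpha_gt0 gamma_gt0
  gamma_le_alpha gamma_small (x0 := x0) (y0 := y0) f_ge h_ge0 gfC2 alpha_le1 alpha_le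
  K_alpha h0_le f0_le.
have sumR := alpha_sum_sqgrad_le gradf lipf gradh liph Lf_ge0 Lh_gt0 alpha_gt0 gamma_gt0
  gamma_le_alpha gamma_small (x0 := x0) (y0 := y0) f_ge h_ge0 gfC2 alpha_le1 alpha_le
  K_alpha h0_le f0_le.
have Mdir_le : Mdir (F0 - fbar) <= Mdir (`|F0 - fbar|).
  by rewrite ler_wpM2l ?(ltW T_gt0) // !lerD2r ler_wpM2l // lerD2r ler_norm.
have Lh2_ge0 : 0 <= Lh / 2 by rewrite divr_ge0 ?ltW.
have := ler_wpM2l Lh2_ge0 Mdir_le; have := mulr_ge0 Lh2_ge0 Mdir_ge0.
have := mulr_ge0 (ltW T_gt0) (ltW C0_gt0); have := Mdir_ge0.
by rewrite /rate_const; split; [apply: le_trans sumD _ | apply: le_trans sumR _]; lra.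
Qed.
End Complexity.

Theorem mainTheorem3 (R : realType) (Lf Lh Cf C0 fbar F0 : R) :
  0 <= Lf -> 0 < Lh -> 0 <= Cf -> 0 < C0 ->
  exists c : R, 0 < c /\
  forall (n m : nat) (f g : 'rV[R]_n * 'rV[R]_m -> R)
    (Gfx gx Hx : 'rV[R]_n * 'rV[R]_m -> 'rV[R]_n)
    (Gfy gy Hy : 'rV[R]_n * 'rV[R]_m -> 'rV[R]_m),
  (* f: C^1, inf f = fbar > -oo, grad f Lf-Lipschitz and bounded by Cf *)
  has_gradient f Gfx Gfy ->
  (forall p, fbar <= f p) -> (forall e : R, 0 < e -> exists p, f p < fbar + e) ->
  lipschitz_grad Lf Gfx Gfy ->
  (forall p, enorm2 (Gfx p, Gfy p) <= Cf) ->
  (* g: twice continuously differentiable with gradient (gx, gy) *)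
  has_gradient g gx gy -> C1map gx -> C1map gy ->
  (* h := ||grad_y g||^2 is C^1 with Lh-Lipschitz gradient (Hx, Hy) *)
  has_gradient (fun p => sqn (gy p)) Hx Hy ->
  lipschitz_grad Lh Hx Hy ->
  let h := fun p => sqn (gy p) in
  let rho := fun p => sqn (Hx p) + sqn (Hy p) in
  let alpha := fun K : nat => K%:R `^ (- (1 / 3)) in
  let gamma := fun K : nat => Num.min (alpha K) (1 / (Lf + alpha K * Lh)) in
  let it := fun K x0 y0 => alg_iter Gfx Hx Gfy Hy rho (alpha K) (gamma K) x0 y0 in
  let lam := fun K p => alg_lambda Gfx Hx Gfy Hy rho (alpha K) p in
  let D := fun K p => sqn (alg_Dx Gfx Hx Gfy Hy rho (alpha K) p)
                      + sqn (alg_Dy Gfx Hx Gfy Hy rho (alpha K) p) in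
  (forall (K : nat) (x0 : 'rV[R]_n) (y0 : 'rV[R]_m), (1 <= K)%N ->
     h (x0, y0) <= alpha K ^+ 2 * C0 -> f (x0, y0) <= F0 ->
     K%:R^-1 * \sum_(k < K) D K (it K x0 y0 k) <= c * K%:R `^ (- (2 / 3)) /\
     K%:R^-1 * \sum_(k < K) rho (it K x0 y0 k) <= c * K%:R `^ (- (2 / 3)))
  /\
  (forall eps : R, 0 < eps ->
     exists K : nat, (1 <= K)%N /\ K%:R <= c * eps `^ (- (3 / 2)) + 1 /\
     forall (x0 : 'rV[R]_n) (y0 : 'rV[R]_m),
       h (x0, y0) <= alpha K ^+ 2 * C0 -> f (x0, y0) <= F0 ->
       exists t : nat, (t < K)%N /\
         Num.max (rho (it K x0 y0 t))
           (enorm2 (Gfx (it K x0 y0 t) + lam K (it K x0 y0 t) *: Hx (it K x0 y0 t),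
                    Gfy (it K x0 y0 t) + lam K (it K x0 y0 t) *: Hy (it K x0 y0 t)) ^+ 2)
         <= eps).
Proof.
move=> Lf_ge0 Lh_gt0 _ C0_gt0; set c1 := rate_const Lf Lh Cf C0 fbar F0.
have c1_gt0 : 0 < c1 := rate_const_gt0 Cf fbar F0 Lf_ge0 Lh_gt0 C0_gt0.
exists (Num.max c1 ((2 * c1) `^ (3 / 2))); split; first by rewrite lt_max c1_gt0.
move=> n m f g Gfx gx Hx Gfy gy Hy gradf f_ge _ lipf Cf_bound _ _ _ gradh liph.
move=> h rho alpha gamma it lam D.
have sums K x0 y0 := alg_alpha_sums_le Lf_ge0 Lh_gt0 C0_gt0 gradf lipf f_ge Cf_bound
  gradh liph (fun p => sqn_ge0 (gy p)) (F0 := F0) (K := K) (x0 := x0) (y0 := y0).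
have c1_le : c1 <= Num.max c1 ((2 * c1) `^ (3 / 2)) by rewrite le_max lexx.
split.
  move=> K x0 y0 K_gt0 h0_le f0_le; have [sumD sumR] := sums K x0 y0 K_gt0 h0_le f0_le.
  split; apply: mean_le_rate; try (apply: sumr_ge0 => k _; exact: (psq_ge0 (_, _))).
    by apply: le_trans c1_le; exact: sumD.
  by apply: le_trans c1_le; exact: sumR.
move=> eps eps_gt0.
have [K [K_gt0 K_le rate_le]] := exists_index_rate (mulr_gt0 (ltr0n _ 2) c1_gt0) eps_gt0.
exists K; split => //; split.
  by apply: le_trans K_le _; rewrite lerD2r ler_wpM2r ?powR_ge0 // le_max lexx orbT.
move=> x0 y0 h0_le f0_le; have [sumD sumR] := sums K x0 y0 K_gt0 h0_le f0_le.
have [t t_lt le_t] : exists2 t, (t < K)%N & rho (it K x0 y0 t) + D K (it K x0 y0 t) <= eps.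
  apply: exists_le_mean K_gt0 (le_trans (mean_le_rate _ _) rate_le).
    by apply: sumr_ge0 => k _; exact: addr_ge0 (psq_ge0 (_, _)) (psq_ge0 (_, _)).
  by rewrite big_split mulrDr mulr_natl mulr2n; apply: lerD.
exists t; split => //; rewrite enorm2_kkt_residual ge_max.
rewrite !(le_trans _ le_t) //; first exact: ler_wpDl (psq_ge0 (_, _)) (lexx _).
by rewrite lerDl; exact: (psq_ge0 (_, _)).
Qed.
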